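(* Fix $R\in[0,1)$ and let $r_1=\tfrac12-\tfrac R2+\tfrac{1-R^2}4$, $r_2=\tfrac12-\tfrac R2-\tfrac{1-R^2}4$. For $0<\mu<L$ with $\kappa=\mu/L$, set $\mu_1=\mu$, $L_1=\mu+r_1(L-\mu)$, $\mu_2=L-r_2(L-\mu)$, $L_2=L$, $$s=1+2\frac{\mu_1L_1\mu_2}{(L_2-\mu_1)(L_2-L_1)(L_2-\mu_2)},\qquad \sqrt m=\big(s-\sqrt{s^2-1}\big)^{1/3}$$ (the asymptotic rate factor of the optimally tuned 3-cycle heavy ball method on $[\mu_1,L_1]\cup[\mu_2,L_2]$). Then as $\kappa\to0$, $$\sqrt m=1-2\sqrt\kappa\sqrt{\frac{1-R^2/9}{1-R^2}}+o(\sqrt\kappa).$$ *)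

From Stdlib Require Import Reals.
Open Scope R_scope.

Definition r1 (Rr : R) : R := 1/2 - Rr/2 + (1 - Rr^2)/4.
Definition r2 (Rr : R) : R := 1/2 - Rr/2 - (1 - Rr^2)/4.

Definition mu1 (Rr mu L : R) : R := mu.
Definition L1 (Rr mu L : R) : R := mu + r1 Rr * (L - mu).
Definition mu2 (Rr mu L : R) : R := L - r2 Rr * (L - mu).
Definition L2 (Rr mu L : R) : R := L.

Definition s_param (Rr mu L : R) : R :=
  1 + 2 * (mu1 Rr mu L * L1 Rr mu L * mu2 Rr mu L) /
      ((L2 Rr mu L - mu1 Rr mu L) * (L2 Rr mu L - L1 Rr mu L) * (L2 Rr mu L - mu2 Rr mu L)).

(* sqrt m = (s - sqrt(s^2-1))^(1/3); the base is > 0 since s >= 1. *)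
Definition sqrt_m (Rr mu L : R) : R :=
  let s := s_param Rr mu L in Rpower (s - sqrt (s^2 - 1)) (1/3).

(* Write k = mu/L, x = sqrt k and q = (1 - R^2/9)/(1 - R^2).  The proof has
   three ingredients.
   1. Normal form: after dividing numerator and denominator by L^3,
      s = 1 + 2 k A(k) with an explicit rational function A, and
      9q <= A(k) <= 9q + O(k) for 0 < k <= 1/2.
   2. Cube-root expansion: t = s - sqrt(s^2 - 1) satisfies
      (1 - t)^2 = 2 (s - 1) t, so u = t^(1/3) solves
      (1 - u^3)^2 = 4 k A u^3; squeezing 1 - u^3 between 2 x sqrt(A) u^2 and
      2 x sqrt(A) gives 1 - u = (2/3) x sqrt(A) + O(k).
   3. Since sqrt(A) = 3 sqrt(q) + O(k), we get
      sqrt m = 1 - 2 x sqrt(q) + O(k), and O(k) = O(x^2) is o(x). *)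

From Stdlib Require Import Reals Lra Psatz.
Open Scope R_scope.

Lemma le_of_sq_le (z y : R) : 0 <= y -> z^2 <= y^2 -> z <= y.
Proof.
  intros hy hzy. apply Rsqr_incr_0_var; [unfold Rsqr; nra | exact hy].
Qed.

Lemma cube_root_spec (t : R) : 0 < t -> 0 < Rpower t (1/3) /\ Rpower t (1/3) ^ 3 = t.
Proof.
  intro ht. split; [apply exp_pos|].
  rewrite <- Rpower_pow by apply exp_pos.
  rewrite Rpower_mult. replace (1/3 * INR 3) with 1 by (simpl; field).
  apply Rpower_1; exact ht.
Qed.

(* For s >= 1 the smaller root t = s - sqrt(s^2-1) of t^2 - 2 s t + 1 lies in
   (0,1] and satisfies (1 - t)^2 = 2 (s - 1) t. *)
Lemma small_root_spec (s : R) : 1 <= s ->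
  0 < s - sqrt (s^2 - 1) /\ s - sqrt (s^2 - 1) <= 1 /\
  (1 - (s - sqrt (s^2 - 1)))^2 = 2 * (s - 1) * (s - sqrt (s^2 - 1)).
Proof.
  intro hs. assert (h0 : 0 <= s^2 - 1) by nra.
  pose proof (sqrt_sqrt _ h0) as hw. pose proof (sqrt_pos (s^2 - 1)) as hp.
  set (w := sqrt (s^2 - 1)) in *.
  split; [|split]; nra.
Qed.

(* If u in (0,1] solves (1 - u^3)^2 = 4 x^2 a^2 u^3, then taking square roots
   of 4 x^2 a^2 u^4 <= (1 - u^3)^2 <= 4 x^2 a^2 squeezes 1 - u^3. *)
Lemma one_minus_cube_squeeze (u x a : R) : 0 < u -> u <= 1 -> 0 <= x -> 0 <= a ->
  (1 - u^3)^2 = 4 * x^2 * a^2 * u^3 ->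
  2 * x * a * u^2 <= 1 - u^3 <= 2 * x * a.
Proof.
  intros hu0 hu1 hx ha he.
  assert (hu3 : u^3 <= 1) by nra.
  assert (hu4 : u^4 <= u^3) by nra.
  assert (hxa : 0 <= x^2 * a^2) by nra.
  split; apply le_of_sq_le.
  - nra.
  - rewrite he. replace ((2 * x * a * u^2)^2) with (4 * (x^2 * a^2) * u^4) by ring. nra.
  - nra.
  - rewrite he. replace ((2 * x * a)^2) with (4 * (x^2 * a^2) * 1) by ring. nra.
Qed.

Lemma one_minus_cube_expansion (u x a : R) : 0 < u -> u <= 1 -> 0 <= x -> 0 <= a ->
  (1 - u^3)^2 = 4 * x^2 * a^2 * u^3 ->
  Rabs ((1 - u) - 2/3 * x * a) <= 64/9 * x^2 * a^2.
Proof.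
  intros hu0 hu1 hx ha he.
  destruct (one_minus_cube_squeeze u x a hu0 hu1 hx ha he) as [hlo hhi].
  set (v := 1 - u). assert (hu : u = 1 - v) by (unfold v; ring).
  rewrite hu in hlo, hhi. clearbody v. subst u.
  assert (hv0 : 0 <= v) by lra.
  (* 1 - (1-v)^3 = v (3 - 3 v + v^2) lies between 3 v (1 - v) and 3 v. *)
  assert (hv : v <= 8/3 * x * a) by nra.
  assert (hl : 3 * v - 2 * x * a <= 3 * v^2) by nra.
  assert (hr : -(4 * x * a * v) <= 3 * v - 2 * x * a) by nra.
  apply Rabs_le. split.
  - assert (x * a * v <= 8/3 * (x * a)^2) by nra. nra.
  - assert (v^2 <= (8/3 * x * a)^2) by nra. nra.
Qed.

Lemma cube_root_rate (k A : R) : 0 <= k -> 0 <= A ->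
  let s := 1 + 2 * k * A in
  let u := Rpower (s - sqrt (s^2 - 1)) (1/3) in
  0 < u /\ u <= 1 /\
  Rabs ((1 - u) - 2/3 * sqrt k * sqrt A) <= 64/9 * k * A.
Proof.
  intros hk hA s u.
  assert (hs : 1 <= s) by (unfold s; nra).
  destruct (small_root_spec s hs) as [ht0 [ht1 ht2]].
  destruct (cube_root_spec _ ht0) as [hu0 hu3]. fold u in hu0, hu3.
  rewrite <- hu3 in ht1, ht2.
  assert (hu1 : u <= 1) by nra.
  pose proof (sqrt_sqrt k hk) as hx2. pose proof (sqrt_sqrt A hA) as ha2.
  assert (he : (1 - u^3)^2 = 4 * sqrt k ^ 2 * sqrt A ^ 2 * u^3).
  { rewrite ht2. unfold s. simpl. rewrite !Rmult_1_r, hx2, ha2. ring. }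
  split; [exact hu0|split; [exact hu1|]].
  replace (64/9 * k * A) with (64/9 * sqrt k ^ 2 * sqrt A ^ 2)
    by (simpl; rewrite !Rmult_1_r, hx2, ha2; ring).
  apply one_minus_cube_expansion; auto using sqrt_pos.
Qed.

Lemma sqrt_increment (c A : R) : 0 < c -> c <= A ->
  0 <= sqrt A - sqrt c <= (A - c) / (2 * sqrt c).
Proof.
  intros hc hcA.
  pose proof (sqrt_lt_R0 c hc) as hsc.
  pose proof (sqrt_le_1 c A (Rlt_le _ _ hc) ltac:(lra) hcA) as hmono.
  pose proof (sqrt_sqrt c (Rlt_le _ _ hc)) as hc2.
  pose proof (sqrt_sqrt A ltac:(lra)) as hA2.
  split; [lra|].
  apply (Rmult_le_reg_r (2 * sqrt c)); [lra|].
  unfold Rdiv. rewrite Rmult_assoc, Rinv_l, Rmult_1_r by lra.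
  nra.
Qed.

Lemma r_closed_forms (Rr : R) :
  r1 Rr = (1 - Rr) * (3 + Rr) / 4 /\ 1 - r1 Rr = (1 + Rr)^2 / 4 /\
  r2 Rr = (1 - Rr)^2 / 4.
Proof. unfold r1, r2. repeat split; field. Qed.

(* The scale-free quantity A(k) such that s = 1 + 2 k A(k), k = mu/L. *)
Definition Afun (Rr k : R) : R :=
  (k + r1 Rr * (1 - k)) * (1 - r2 Rr * (1 - k)) / ((1 - k)^3 * ((1 - r1 Rr) * r2 Rr)).

(* Its limit A(0) = 9 q and the denominator constant (1 - r1) r2. *)
Definition cc (Rr : R) : R := (9 - Rr^2) / (1 - Rr^2).
Definition PP (Rr : R) : R := (1 - Rr^2)^2 / 16.

Definition rate_coef (Rr : R) : R := (1 - Rr^2 / 9) / (1 - Rr^2).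

Lemma PP_pos (Rr : R) : 0 <= Rr -> Rr < 1 -> 0 < PP Rr.
Proof. intros h0 h1. unfold PP. assert (0 < 1 - Rr^2) by nra. nra. Qed.

Lemma rate_coef_ge1 (Rr : R) : 0 <= Rr -> Rr < 1 -> 1 <= rate_coef Rr.
Proof.
  intros h0 h1. unfold rate_coef. assert (0 < 1 - Rr^2) by nra.
  apply (Rmult_le_reg_r (1 - Rr^2)); [lra|]. field_simplify; nra.
Qed.

Lemma cc_rate_coef (Rr : R) : 0 <= Rr -> Rr < 1 -> cc Rr = 9 * rate_coef Rr.
Proof. intros h0 h1. unfold cc, rate_coef. field. nra. Qed.

Lemma s_param_normal_form (Rr mu L : R) : 0 <= Rr -> Rr < 1 -> 0 < mu -> mu < L ->
  s_param Rr mu L = 1 + 2 * (mu / L) * Afun Rr (mu / L).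
Proof.
  intros h0 h1 hm hL.
  destruct (r_closed_forms Rr) as [_ [hr1 hr2]].
  assert (r2 Rr <> 0) by (rewrite hr2; nra).
  assert (1 - r1 Rr <> 0) by (rewrite hr1; nra).
  set (k := mu / L). assert (hmu : mu = k * L) by (unfold k; field; lra).
  assert (hk : k < 1).
  { unfold k. apply (Rmult_lt_reg_r L); [lra|]. field_simplify; lra. }
  rewrite hmu. clearbody k. unfold s_param, Afun, mu1, L1, mu2, L2.
  replace (L - k * L) with (L * (1 - k)) by ring.
  replace (L - (k * L + r1 Rr * (L * (1 - k)))) with (L * ((1 - k) * (1 - r1 Rr))) by ring.
  replace (L - (L - r2 Rr * (L * (1 - k)))) with (L * ((1 - k) * r2 Rr)) by ring.
  field. repeat split; lra.
Qed.

(* A(k) = cc + k F / ((1-k)^3 PP) with 0 <= F <= 6, hence, for k <= 1/2,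
   cc <= A(k) <= cc + 48 k / PP. *)
Lemma Afun_bounds (Rr k : R) : 0 <= Rr -> Rr < 1 -> 0 < k -> k <= 1/2 ->
  cc Rr <= Afun Rr k <= cc Rr + 48 * k / PP Rr.
Proof.
  intros h0 h1 hk0 hk1.
  destruct (r_closed_forms Rr) as [hr1' [hr1 hr2]].
  assert (hP : (1 - r1 Rr) * r2 Rr = PP Rr) by (rewrite hr1, hr2; unfold PP; field).
  pose proof (PP_pos Rr h0 h1) as hP0.
  assert (hc : cc Rr * PP Rr = r1 Rr * (1 - r2 Rr)).
  { rewrite hr1', hr2. unfold cc, PP. field. nra. }
  set (a := r1 Rr) in *. set (b := r2 Rr) in *.
  assert (ha0 : 0 <= a) by (rewrite hr1'; nra).
  assert (ha1 : a <= 1) by nra.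
  assert (hb0 : 0 <= b) by (rewrite hr2; nra).
  assert (hb1 : b <= 1) by (rewrite hr2; nra).
  set (d := 1 - k).
  assert (hd3 : 1/8 <= d^3) by (unfold d; nra).
  set (F := (1 - a) * (1 - b) + a * b + k * (1 - a) * b + a * (1 - b) * (3 - 3 * k + k^2)).
  assert (hF : (k + a * d) * (1 - b * d) - d^3 * (cc Rr * PP Rr) = k * F).
  { rewrite hc. unfold F, d. ring. }
  assert (hF0 : 0 <= F).
  { unfold F. assert (0 <= k * (1 - a) * b) by (repeat apply Rmult_le_pos; lra).
    assert (0 <= a * (1 - b) * (3 - 3 * k + k^2)) by (repeat apply Rmult_le_pos; nra).
    nra. }
  assert (hF6 : F <= 6).
  { unfold F. assert (0 <= a * (1 - b)) by nra.
    assert (k * (1 - a) <= 1) by nra.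
    assert (3 - 3 * k + k^2 <= 3) by nra. nra. }
  unfold Afun. fold a b d. rewrite hP.
  assert (hD : 0 < d^3 * PP Rr) by nra.
  assert (hA : (k + a * d) * (1 - b * d) / (d^3 * PP Rr) = cc Rr + k * F / (d^3 * PP Rr)).
  { replace ((k + a * d) * (1 - b * d)) with (d^3 * (cc Rr * PP Rr) + k * F) by lra.
    field. split; [|nra]; lra. }
  rewrite hA.
  assert (hpos : 0 <= k * F / (d^3 * PP Rr)) by (apply Rle_mult_inv_pos; nra).
  split; [lra|]. apply Rplus_le_compat_l.
  apply (Rmult_le_reg_r (d^3 * PP Rr)); [exact hD|].
  unfold Rdiv. rewrite Rmult_assoc, Rinv_l, Rmult_1_r by lra.
  replace (48 * k * / PP Rr * (d^3 * PP Rr)) with (48 * k * d^3) by (field; lra).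
  nra.
Qed.

(* sqrt A(k) = 3 sqrt q + O(k): the square root of the bounds on A(k),
   using sqrt(9 q) = 3 sqrt q and q >= 1. *)
Lemma sqrt_Afun_bounds (Rr k : R) : 0 <= Rr -> Rr < 1 -> 0 < k -> k <= 1/2 ->
  0 <= sqrt (Afun Rr k) - 3 * sqrt (rate_coef Rr) <= 8 * k / PP Rr.
Proof.
  intros h0 h1 hk0 hk1.
  pose proof (PP_pos Rr h0 h1) as hP0.
  pose proof (rate_coef_ge1 Rr h0 h1) as hq1.
  destruct (Afun_bounds Rr k h0 h1 hk0 hk1) as [hA1 hA2].
  assert (hcA : 0 < cc Rr) by (rewrite cc_rate_coef by auto; lra).
  assert (hK : sqrt (cc Rr) = 3 * sqrt (rate_coef Rr)).
  { rewrite cc_rate_coef, sqrt_mult by lra.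
    replace 9 with (3 * 3) by ring. rewrite sqrt_square; lra. }
  assert (hK1 : 1 <= sqrt (rate_coef Rr)) by (rewrite <- sqrt_1; apply sqrt_le_1; lra).
  destruct (sqrt_increment (cc Rr) (Afun Rr k) hcA hA1) as [hd0 hd1].
  rewrite hK in hd0, hd1.
  split; [exact hd0|].
  eapply Rle_trans; [exact hd1|].
  apply (Rmult_le_reg_r (2 * (3 * sqrt (rate_coef Rr)))); [lra|].
  unfold Rdiv. rewrite Rmult_assoc, Rinv_l, Rmult_1_r by lra.
  replace (8 * k * / PP Rr * (2 * (3 * sqrt (rate_coef Rr))))
    with (48 * k * / PP Rr * sqrt (rate_coef Rr)) by ring.
  assert (0 <= 48 * k * / PP Rr) by (apply Rle_mult_inv_pos; lra). nra.
Qed.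

Lemma sqrt_m_expansion (Rr : R) : 0 <= Rr -> Rr < 1 ->
  exists B : R, 0 < B /\ forall mu L : R, 0 < mu -> mu < L -> mu / L <= 1/2 ->
    Rabs (sqrt_m Rr mu L - (1 - 2 * sqrt (mu / L) * sqrt (rate_coef Rr)))
    <= B * (mu / L).
Proof.
  intros h0 h1.
  pose proof (PP_pos Rr h0 h1) as hP0.
  pose proof (rate_coef_ge1 Rr h0 h1) as hq1.
  exists (64/9 * (cc Rr + 48 / PP Rr) + 16 / (3 * PP Rr)). split.
  { rewrite cc_rate_coef by auto.
    assert (0 < 48 / PP Rr) by (apply Rdiv_lt_0_compat; lra).
    assert (0 < 16 / (3 * PP Rr)) by (apply Rdiv_lt_0_compat; lra). nra. }
  intros mu L hmu hmuL hk1.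
  assert (hk0 : 0 < mu / L) by (apply Rdiv_lt_0_compat; lra).
  unfold sqrt_m. rewrite (s_param_normal_form Rr mu L) by lra.
  set (k := mu / L) in *. clearbody k.
  destruct (Afun_bounds Rr k h0 h1 hk0 hk1) as [hA1 hA2].
  assert (hA0 : 0 <= Afun Rr k) by (rewrite cc_rate_coef in hA1 by auto; lra).
  destruct (cube_root_rate k (Afun Rr k) ltac:(lra) hA0) as [_ [_ hexp]].
  set (u := Rpower _ (1/3)) in *. clearbody u.
  destruct (sqrt_Afun_bounds Rr k h0 h1 hk0 hk1) as [hd0 hd2].
  set (A := Afun Rr k) in *. clearbody A.
  (* Error budget: the cube-root error plus the square-root error. *)
  pose proof (sqrt_pos k) as hx0.
  pose proof (sqrt_pos (rate_coef Rr)) as hK0.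
  assert (hx1 : sqrt k <= 1) by (rewrite <- sqrt_1; apply sqrt_le_1; lra).
  set (x := sqrt k) in *. set (K := sqrt (rate_coef Rr)) in *.
  replace (u - (1 - 2 * x * K))
    with (-((1 - u) - 2/3 * x * sqrt A) - 2/3 * x * (sqrt A - 3 * K)) by field.
  eapply Rle_trans; [apply Rabs_triang|]. rewrite !Rabs_Ropp.
  rewrite (Rabs_pos_eq (2/3 * x * (sqrt A - 3 * K))) by nra.
  assert (h48 : 48 * k / PP Rr <= 48 / PP Rr)
    by (unfold Rdiv; apply Rmult_le_compat_r; [left; apply Rinv_0_lt_compat|]; lra).
  assert (hcube : 64/9 * k * A <= 64/9 * (cc Rr + 48 / PP Rr) * k) by nra.
  assert (hsq : 2/3 * x * (sqrt A - 3 * K) <= 16 / (3 * PP Rr) * k).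
  { replace (16 / (3 * PP Rr) * k) with (2/3 * 1 * (8 * k / PP Rr)) by (field; lra).
    apply Rmult_le_compat; nra. }
  lra.
Qed.

Lemma linear_bound_little_o_sqrt (B eps k : R) : 0 < B -> 0 < eps -> 0 < k ->
  k < (eps / B)^2 -> B * k <= eps * sqrt k.
Proof.
  intros hB heps hk hkd.
  pose proof (sqrt_sqrt k (Rlt_le _ _ hk)) as hx2. pose proof (sqrt_pos k) as hx0.
  assert (hEB : 0 < eps / B) by (apply Rdiv_lt_0_compat; lra).
  assert (hx : sqrt k < eps / B) by nra.
  assert (hBx : B * sqrt k <= eps).
  { apply (Rmult_lt_compat_l B) in hx; [|exact hB].
    unfold Rdiv in hx. rewrite <- Rmult_assoc, (Rmult_comm B eps), Rmult_assoc,
      Rinv_r, Rmult_1_r in hx by lra. lra. }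
  rewrite <- hx2 at 1. nra.
Qed.

Theorem mainTheorem17 (Rr : R) (hR0 : 0 <= Rr) (hR1 : Rr < 1) :
  forall eps : R, eps > 0 -> exists delta : R, delta > 0 /\
    forall mu L : R, 0 < mu -> mu < L -> mu / L < delta ->
      Rabs (sqrt_m Rr mu L
            - (1 - 2 * sqrt (mu / L) * sqrt ((1 - Rr^2 / 9) / (1 - Rr^2))))
      <= eps * sqrt (mu / L).
Proof.
  intros eps heps.
  destruct (sqrt_m_expansion Rr hR0 hR1) as [B [hB hexp]].
  exists (Rmin (1/2) ((eps / B)^2)). split.
  { apply Rmin_glb_lt; [lra|]. assert (0 < eps / B) by (apply Rdiv_lt_0_compat; lra). nra. }
  intros mu L hmu hmuL hdelta.
  assert (hk0 : 0 < mu / L) by (apply Rdiv_lt_0_compat; lra).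
  pose proof (Rmin_l (1/2) ((eps / B)^2)). pose proof (Rmin_r (1/2) ((eps / B)^2)).
  eapply Rle_trans; [apply (hexp mu L); lra|].
  apply linear_bound_little_o_sqrt; lra.
Qed.
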